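(* Let $G=(V,E)$ be a graph and let $u_1\in V$ be a universal vertex (adjacent to all other vertices). (1) If $G$ has another universal vertex $u_2\neq u_1$, then the perfect dominating sets of $G$ are exactly $V$ and the singletons $\{u\}$ with $u$ a universal vertex of $G$. (2) If $u_1$ is the unique universal vertex of $G$, then every perfect dominating set of $G$ contains $u_1$. Moreover, let $G_1=(V_1,E_1),\dots,G_k=(V_k,E_k)$ be the connected components of $G-u_1$. Then (a) every perfect dominating set $D$ of $G$ satisfies, for each $i$ and each $w\in V_i$: $w\in D$ if and only if $V_i\subseteq D$ (i.e., each $V_i$ is either contained in $D$ or disjoint from $D$); and (b) every subset $V'\subseteq V$ that contains $u_1$ and satisfies the property in (a) is a perfect dominating set of $G$.
   Context: A perfect dominating set of a graph $G$ is a set $D\subseteq V(G)$ such that every vertex $v\in V(G)\setminus D$ is adjacent to exactly one vertex of $D$. *)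

(* A simple graph is a symmetric irreflexive relation e on a finType T. *)
From mathcomp Require Import all_boot.
Set Implicit Arguments. Unset Strict Implicit. Unset Printing Implicit Defensive.

Definition universal (T : finType) (e : rel T) (u : T) : Prop :=
  forall v, v != u -> e u v.

Definition perfect_dominating (T : finType) (e : rel T) (D : {set T}) : Prop :=
  forall v, v \notin D -> #|[set w in D | e v w]| = 1.

Definition del_rel (T : finType) (e : rel T) (u : T) : rel T :=
  fun x y => [&& x != u, y != u & e x y].

(* vertex set of the connected component of G - u containing w (for w != u) *)
Definition comp_del (T : finType) (e : rel T) (u w : T) : {set T} :=
  [set w' | connect (del_rel e u) w w'].

(* D is a union of connected components of G - u: for each w != u,
   w \in D iff the whole component of w is contained in D *)
Definition component_closed (T : finType) (e : rel T) (u : T) (D : {set T}) : Prop :=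
  forall w, w != u -> (w \in D <-> comp_del e u w \subset D).

(* If a universal vertex u lies in D, then u already dominates every vertex outside D,
   so D is perfect exactly when no other vertex of D has a neighbour outside D.
   Hence a second universal vertex in D forces D = V, and D is closed under the
   edges of G - u, i.e. D is a union of components of G - u.  If instead a
   universal vertex lies outside D, its unique neighbour in D is all of D, and
   that vertex must itself be universal. *)
From mathcomp Require Import all_boot.

Section PerfectDomination.

Context {T : finType} {e : rel T}.
Hypothesis e_sym : symmetric e.

Lemma perfect_dominating_setT : perfect_dominating e [set: T].
Proof. by move=> v; rewrite inE. Qed.

Lemma perfect_dominating_universal_set1 u :
  universal e u -> perfect_dominating e [set u].
Proof.
move=> hu v; rewrite inE => vu.
suff -> : [set w in [set u] | e v w] = [set u] by rewrite cards1.
apply/setP => w; rewrite !inE andb_idr // => /eqP ->.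
by rewrite e_sym hu.
Qed.

Lemma perfect_dominatingP {u : T} {D : {set T}} :
  universal e u -> u \in D ->
  perfect_dominating e D <->
  (forall v w, v \notin D -> w \in D -> e v w -> w = u).
Proof.
move=> hu uD.
have nbr_u v : v \notin D -> u \in [set w in D | e v w].
  move=> vD; have vu : v != u by apply: contraNneq vD => ->.
  by rewrite inE uD e_sym hu.
split=> [hD v w vD wD evw | hD v vD].
  have /cards1P [x Sx] := introT eqP (hD v vD).
  have := nbr_u v vD; have : w \in [set w in D | e v w] by rewrite inE wD.
  by rewrite Sx !inE => /eqP -> /eqP ->.
suff -> : [set w in D | e v w] = [set u] by rewrite cards1.
apply/eqP; rewrite eqEsubset sub1set nbr_u // andbT.
by apply/subsetP => w; rewrite !inE => /andP [wD evw]; rewrite (hD v w).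
Qed.

Lemma perfect_dominating_two_universal {u1 u2 : T} {D : {set T}} :
  universal e u1 -> universal e u2 -> u2 != u1 -> u1 \in D -> u2 \in D ->
  perfect_dominating e D -> D = [set: T].
Proof.
move=> hu1 hu2 u21 u1D u2D /(perfect_dominatingP hu1 u1D) hD.
apply/setP => v; rewrite inE; apply: contraT => vD.
have vu2 : v != u2 by apply: contraNneq vD => ->.
by rewrite (hD v u2) ?eqxx // e_sym hu2 in u21.
Qed.

Lemma perfect_dominating_notin_universal {u : T} {D : {set T}} :
  universal e u -> u \notin D -> perfect_dominating e D ->
  exists w, universal e w /\ D = [set w].
Proof.
move=> hu uD hD.
have nbr_u : [set w in D | e u w] = D.
  apply/setP => w; rewrite inE andb_idr // => wD.
  by apply: hu; apply: contraNneq uD => <-.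
have /cards1P [w Dw] := introT eqP (hD u uD); rewrite nbr_u in Dw.
exists w; split=> // v vw.
have vD : v \notin D by rewrite Dw inE.
have /cards1P [x Sx] := introT eqP (hD v vD).
have : x \in [set y in D | e v y] by rewrite Sx set11.
by rewrite inE Dw inE => /andP [/eqP -> evw]; rewrite e_sym.
Qed.

Lemma perfect_dominating_closed_del {u : T} {D : {set T}} :
  universal e u -> u \in D -> perfect_dominating e D ->
  closed (del_rel e u) (mem D).
Proof.
move=> hu uD /(perfect_dominatingP hu uD) hD.
have stepD x y : del_rel e u x y -> x \in D -> y \in D.
  case/and3P=> xu _ exy xD; apply: contraT => yD.
  by rewrite (hD y x) ?eqxx // e_sym in xu.
move=> x y exy; apply/idP/idP; first exact: stepD.
by apply: stepD; case/and3P: exy => xu yu exy; rewrite /del_rel xu yu e_sym.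
Qed.

Lemma closed_del_component_closed {u : T} {D : {set T}} :
  closed (del_rel e u) (mem D) -> component_closed e u D.
Proof.
move=> clD w _; split=> [wD | /subsetP]; last by apply; rewrite inE connect0.
by apply/subsetP => y; rewrite inE => /(closed_connect clD) <-.
Qed.

Lemma component_closed_perfect_dominating {u : T} {D : {set T}} :
  universal e u -> u \in D -> component_closed e u D -> perfect_dominating e D.
Proof.
move=> hu uD hc; apply/(perfect_dominatingP hu uD) => v w vD wD evw.
have vu : v != u by apply: contraNneq vD => ->.
apply/eqP; apply: contraNT vD => wu.
have /subsetP := (hc w wu).1 wD; apply; rewrite inE.
by apply: connect1; rewrite /del_rel wu vu e_sym.
Qed.

End PerfectDomination.

Theorem lemma5 (T : finType) (e : rel T) (e_sym : symmetric e) (e_irr : irreflexive e)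
    (u1 : T) (hu1 : universal e u1) :
  (forall u2, u2 != u1 -> universal e u2 ->
     forall D : {set T}, perfect_dominating e D <->
       (D = [set: T] \/ exists u, universal e u /\ D = [set u]))
  /\
  ((forall u, universal e u -> u = u1) ->
     (forall D : {set T}, perfect_dominating e D -> u1 \in D)
     /\ (forall D : {set T}, perfect_dominating e D -> component_closed e u1 D)
     /\ (forall D : {set T}, u1 \in D -> component_closed e u1 D -> perfect_dominating e D)).
Proof.
split=> [u2 u21 hu2 D | huniq].
  split=> [hD | [-> | [u [hu ->]]]]; last first.
  - exact: perfect_dominating_universal_set1.
  - exact: perfect_dominating_setT.
  have [u1D | u1D] := boolP (u1 \in D); last first.
    by right; apply: perfect_dominating_notin_universal hu1 u1D hD.
  have [u2D | u2D] := boolP (u2 \in D); last first.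
    by right; apply: perfect_dominating_notin_universal hu2 u2D hD.
  by left; apply: perfect_dominating_two_universal hu1 hu2 u21 u1D u2D hD.
have u1_in D : perfect_dominating e D -> u1 \in D.
  move=> hD; apply: contraT => u1D.
  have [w [hw Dw]] := perfect_dominating_notin_universal e_sym hu1 u1D hD.
  by rewrite Dw (huniq w hw) set11 in u1D.
split=> //; split=> [D hD | D u1D].
  exact/closed_del_component_closed/perfect_dominating_closed_del/hD/u1_in.
exact: component_closed_perfect_dominating.
Qed.
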